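(* Let $\xi=e^{i\pi/5}\in\mathbb{C}$, $\tau=\frac{1+\sqrt5}{2}$, $\tau'=\frac{1-\sqrt5}{2}$. For $n\in\mathbb{N}_0$ let $Q_2(n)=\{\sum_{j=0}^9 n_j\xi^j: n_j\in\mathbb{N}_0,\ \sum_j n_j\le n\}$ and $L(n)=Q_2(n)\cap\mathbb{R}$. Then $L(2)\setminus L(1)=\{\pm2,\pm\tau,\pm\tau'\}$.
   Context: $Q_2(n)$ is the $H_2^{\mathrm{aff}}$-induced quasicrystal fragment (all linear combinations of at most $n$ tenth roots of unity with nonnegative integer coefficients); $L(n)$ is its intersection with the real line, denoted $L_{\alpha_1}(n)$ in the paper. *)

From Stdlib Require Import Reals List.
From Coquelicot Require Import Coquelicot.
Open Scope R_scope.

Definition xi : C := (cos (PI / 5), sin (PI / 5)).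

Fixpoint Cpow (z : C) (k : nat) : C :=
  match k with O => 1%C | S k' => (z * Cpow z k')%C end.

Definition tau : R := (1 + sqrt 5) / 2.
Definition tau' : R := (1 - sqrt 5) / 2.

Definition Q2 (n : nat) (z : C) : Prop :=
  exists c : nat -> nat,
    Nat.le (fold_right Nat.add 0%nat (map c (seq 0 10))) n /\
    z = fold_right Cplus 0%C (map (fun j => (INR (c j) * Cpow xi j)%C) (seq 0 10)).

Definition L (n : nat) (z : C) : Prop := Q2 n z /\ Im z = 0.

(* With xi^k = cos(k pi/5) + i sin(k pi/5), cos(pi/5) = tau/2, cos(2 pi/5) = -tau'/2,
   sin(2 pi/5) = tau sin(pi/5) and xi^(k+5) = -xi^k, the point sum_k n_k xi^k has real part
   n0 - n5 + tau/2 (n1 - n4 - n6 + n9) - tau'/2 (n2 - n3 - n7 + n8) and imaginary part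
   sin(pi/5) ((n1 + n4 - n6 - n9) + tau (n2 + n3 - n7 - n8)).  As tau is not an integer,
   with at most two summands the imaginary part vanishes only for conjugate pairs
   xi^k + xi^(10-k) and for sums of copies of xi^0 = 1 and xi^5 = -1; enumerating the
   coefficient vectors gives L(1) = {0, 1, -1} and L(2) = L(1) u {2, -2, tau, -tau, tau', -tau'}. *)

From Pilot Require Import Defs.
From Stdlib Require Import Reals List Lra Lia.
From Coquelicot Require Import Coquelicot.
Open Scope R_scope.

(* Coquelicot exports its own [Cpow], hence the qualified [Defs.Cpow] throughout. *)
Lemma Cpow_cis (a : R) (k : nat) :
  Defs.Cpow (cos a, sin a) k = (cos (INR k * a), sin (INR k * a)).
Proof.
  induction k as [|k IH]; simpl Defs.Cpow.
  - rewrite Rmult_0_l, cos_0, sin_0. reflexivity.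
  - rewrite IH, S_INR, Rmult_plus_distr_r, Rmult_1_l, (Rplus_comm _ a), cos_plus, sin_plus.
    unfold Cmult; simpl. f_equal; ring.
Qed.

Lemma sqrt5_sq : sqrt 5 * sqrt 5 = 5.
Proof. apply sqrt_sqrt. lra. Qed.

Lemma tau_mul_tau' : tau * tau' = -1.
Proof. unfold tau, tau'. pose proof sqrt5_sq. nra. Qed.

Lemma tau_add_tau' : tau + tau' = 1.
Proof. unfold tau, tau'. field. Qed.

Lemma tau_bounds : 1 < tau < 2.
Proof.
  unfold tau. pose proof sqrt5_sq. pose proof (sqrt_pos 5). nra.
Qed.

Lemma golden_positive_root (x : R) : 0 < x -> x * x = x + 1 -> x = tau.
Proof.
  intros Hx Hsq.
  pose proof tau_mul_tau'. pose proof tau_add_tau'. pose proof tau_bounds.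
  assert (Hfactor : (x - tau) * (x - tau') = 0) by nra.
  apply Rmult_integral in Hfactor as [Hroot | Hroot]; lra.
Qed.

Lemma cos_PI5 : cos (PI / 5) = tau / 2.
Proof.
  pose proof PI_RGT_0 as Hpi.
  set (a := PI / 5).
  assert (Hc : 0 < cos a) by (apply cos_gt_0; unfold a; lra).
  assert (H3 : cos (2 * a + a) = - cos (2 * a)).
  { replace (2 * a + a) with (PI - 2 * a) by (unfold a; field).
    apply Rtrigo_facts.cos_pi_minus. }
  rewrite cos_plus, sin_2a, cos_2a_cos in H3.
  assert (Hs : sin a * sin a = 1 - cos a * cos a)
    by (pose proof (sin2_cos2 a) as H; unfold Rsqr in H; lra).
  assert (Hq : (2 * cos a) * (2 * cos a) = 2 * cos a + 1).
  { assert (Hprod : (cos a + 1) * (4 * cos a * cos a - 2 * cos a - 1) = 0).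
    { replace (2 * sin a * cos a * sin a) with (2 * cos a * (sin a * sin a)) in H3 by ring.
      rewrite Hs in H3. lra. }
    apply Rmult_integral in Hprod as [Hneg | Hroot]; lra. }
  pose proof (golden_positive_root (2 * cos a) ltac:(lra) Hq). lra.
Qed.

Lemma cos_2PI5 : cos (2 * (PI / 5)) = - tau' / 2.
Proof.
  rewrite cos_2a_cos, cos_PI5.
  pose proof tau_mul_tau'. pose proof tau_add_tau'. nra.
Qed.

Lemma sin_PI5_pos : 0 < sin (PI / 5).
Proof. pose proof PI_RGT_0. apply sin_gt_0; lra. Qed.

Lemma sin_2PI5 : sin (2 * (PI / 5)) = tau * sin (PI / 5).
Proof. rewrite sin_2a, cos_PI5. field. Qed.

Lemma xi_pow (k : nat) : Defs.Cpow xi k = (cos (INR k * (PI / 5)), sin (INR k * (PI / 5))).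
Proof. apply Cpow_cis. Qed.

Lemma xi_pow_add5 (k : nat) : Defs.Cpow xi (5 + k) = (- Defs.Cpow xi k)%C.
Proof.
  rewrite !xi_pow, plus_INR, Rplus_comm.
  replace ((INR k + INR 5) * (PI / 5)) with (INR k * (PI / 5) + PI) by (simpl; field).
  rewrite neg_cos, neg_sin. reflexivity.
Qed.

Lemma xi_pow0 : Defs.Cpow xi 0 = (1, 0).
Proof. reflexivity. Qed.

Lemma xi_pow1 : Defs.Cpow xi 1 = (tau / 2, sin (PI / 5)).
Proof. rewrite xi_pow, Rmult_1_l, cos_PI5. reflexivity. Qed.

Lemma xi_pow2 : Defs.Cpow xi 2 = (- tau' / 2, tau * sin (PI / 5)).
Proof.
  rewrite xi_pow.
  replace (INR 2 * (PI / 5)) with (2 * (PI / 5)) by (simpl; ring).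
  rewrite cos_2PI5, sin_2PI5. reflexivity.
Qed.

Lemma xi_pow3 : Defs.Cpow xi 3 = (tau' / 2, tau * sin (PI / 5)).
Proof.
  rewrite xi_pow.
  replace (INR 3 * (PI / 5)) with (PI - 2 * (PI / 5)) by (simpl; field).
  rewrite Rtrigo_facts.cos_pi_minus, sin_PI_x, cos_2PI5, sin_2PI5.
  f_equal. field.
Qed.

Lemma xi_pow4 : Defs.Cpow xi 4 = (- tau / 2, sin (PI / 5)).
Proof.
  rewrite xi_pow.
  replace (INR 4 * (PI / 5)) with (PI - PI / 5) by (simpl; field).
  rewrite Rtrigo_facts.cos_pi_minus, sin_PI_x, cos_PI5.
  f_equal. field.
Qed.

Definition coeff_sum (c : nat -> nat) : nat :=
  fold_right Nat.add 0%nat (map c (seq 0 10)).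

Definition lattice_point (c : nat -> nat) : C :=
  fold_right Cplus 0%C (map (fun j => (INR (c j) * Defs.Cpow xi j)%C) (seq 0 10)).

Definition re_coord (c : nat -> nat) : R :=
  INR (c 0%nat) - INR (c 5%nat)
  + tau / 2 * (INR (c 1%nat) - INR (c 4%nat) - INR (c 6%nat) + INR (c 9%nat))
  - tau' / 2 * (INR (c 2%nat) - INR (c 3%nat) - INR (c 7%nat) + INR (c 8%nat)).

Definition im_coord (c : nat -> nat) : R :=
  INR (c 1%nat) + INR (c 4%nat) - INR (c 6%nat) - INR (c 9%nat)
  + tau * (INR (c 2%nat) + INR (c 3%nat) - INR (c 7%nat) - INR (c 8%nat)).

Lemma lattice_point_coords (c : nat -> nat) :
  lattice_point c = (re_coord c, sin (PI / 5) * im_coord c).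
Proof.
  unfold lattice_point, re_coord, im_coord; cbn [seq map fold_right].
  (* The casts are needed for [rewrite] to match [5 + k] against the numerals. *)
  rewrite (xi_pow_add5 0 : Defs.Cpow xi 5 = _), (xi_pow_add5 1 : Defs.Cpow xi 6 = _),
    (xi_pow_add5 2 : Defs.Cpow xi 7 = _), (xi_pow_add5 3 : Defs.Cpow xi 8 = _),
    (xi_pow_add5 4 : Defs.Cpow xi 9 = _).
  rewrite xi_pow0, xi_pow1, xi_pow2, xi_pow3, xi_pow4.
  unfold Cplus, Cmult, Copp, RtoC; simpl. apply f_equal2; field.
Qed.

Lemma L_iff_coords (n : nat) (z : C) :
  L n z <-> exists c, (coeff_sum c <= n)%nat /\ im_coord c = 0 /\ z = RtoC (re_coord c).
Proof.
  split.
  - intros [[c [Hsum Hz]] Him].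
    change (z = lattice_point c) in Hz. subst z.
    rewrite lattice_point_coords in Him |- *. unfold Im in Him; cbn [snd] in Him.
    pose proof sin_PI5_pos.
    assert (Him0 : im_coord c = 0) by (apply Rmult_integral in Him as [H0 | H0]; lra).
    exists c. rewrite Him0, Rmult_0_r. auto.
  - intros (c & Hsum & Him & ->).
    split; [| reflexivity].
    exists c. split; [exact Hsum |].
    change (RtoC (re_coord c) = lattice_point c).
    rewrite lattice_point_coords, Him, Rmult_0_r. reflexivity.
Qed.

Lemma L_mono (m n : nat) (z : C) : (m <= n)%nat -> L m z -> L n z.
Proof.
  intros Hmn [[c [Hsum Hz]] Him].
  split; [exists c; split; [lia | exact Hz] | exact Him].
Qed.

Ltac pick_disjunct tac := first [ tac | left; pick_disjunct tac | right; pick_disjunct tac ].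

Ltac enumerate_coeffs c :=
  unfold coeff_sum, re_coord, im_coord; cbn [seq map fold_right];
  intros Hsum Him;
  destruct (c 0%nat) as [|[|[|?]]]; try lia; destruct (c 1%nat) as [|[|[|?]]]; try lia;
  destruct (c 2%nat) as [|[|[|?]]]; try lia; destruct (c 3%nat) as [|[|[|?]]]; try lia;
  destruct (c 4%nat) as [|[|[|?]]]; try lia; destruct (c 5%nat) as [|[|[|?]]]; try lia;
  destruct (c 6%nat) as [|[|[|?]]]; try lia; destruct (c 7%nat) as [|[|[|?]]]; try lia;
  destruct (c 8%nat) as [|[|[|?]]]; try lia; destruct (c 9%nat) as [|[|[|?]]]; try lia;
  cbn [INR] in *; first [exfalso; lra | pick_disjunct lra].

Lemma re_coord_le1 (c : nat -> nat) : (coeff_sum c <= 1)%nat -> im_coord c = 0 ->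
  re_coord c = 0 \/ re_coord c = 1 \/ re_coord c = -1.
Proof. pose proof tau_bounds. pose proof tau_add_tau'. enumerate_coeffs c. Qed.

Lemma re_coord_le2 (c : nat -> nat) : (coeff_sum c <= 2)%nat -> im_coord c = 0 ->
  (re_coord c = 0 \/ re_coord c = 1 \/ re_coord c = -1) \/
  (re_coord c = 2 \/ re_coord c = -2 \/ re_coord c = tau \/ re_coord c = - tau \/
   re_coord c = tau' \/ re_coord c = - tau').
Proof. pose proof tau_bounds. pose proof tau_add_tau'. enumerate_coeffs c. Qed.

Definition L1_points (z : C) : Prop := z = RtoC 0 \/ z = RtoC 1 \/ z = RtoC (-1).

Definition L2_new_points (z : C) : Prop :=
  z = RtoC 2 \/ z = RtoC (-2) \/ z = RtoC tau \/ z = RtoC (- tau) \/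
  z = RtoC tau' \/ z = RtoC (- tau').

Definition unit_coeffs (i k : nat) : nat := if Nat.eqb k i then 1 else 0.

Definition pair_coeffs (i j k : nat) : nat := unit_coeffs i k + unit_coeffs j k.

Lemma L_of_coeffs (n : nat) (c : nat -> nat) (v : R) :
  (coeff_sum c <= n)%nat -> im_coord c = 0 -> re_coord c = v -> L n (RtoC v).
Proof. intros Hsum Him <-. apply L_iff_coords. exists c. auto. Qed.

Ltac check_coeffs :=
  unfold coeff_sum, re_coord, im_coord, pair_coeffs, unit_coeffs; simpl;
  pose proof tau_add_tau'; first [lia | lra].

Lemma L1_iff (z : C) : L 1 z <-> L1_points z.
Proof.
  split.
  - rewrite L_iff_coords. intros (c & Hsum & Him & ->).
    destruct (re_coord_le1 c Hsum Him) as [E | [E | E]]; rewrite E;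
      unfold L1_points; pick_disjunct reflexivity.
  - intros [-> | [-> | ->]].
    + apply (L_of_coeffs 1 (fun _ => 0%nat)); check_coeffs.
    + apply (L_of_coeffs 1 (unit_coeffs 0)); check_coeffs.
    + apply (L_of_coeffs 1 (unit_coeffs 5)); check_coeffs.
Qed.

Lemma L2_iff (z : C) : L 2 z <-> L1_points z \/ L2_new_points z.
Proof.
  split.
  - rewrite L_iff_coords. intros (c & Hsum & Him & ->).
    destruct (re_coord_le2 c Hsum Him)
      as [[E | [E | E]] | [E | [E | [E | [E | [E | E]]]]]]; rewrite E;
      unfold L1_points, L2_new_points; pick_disjunct reflexivity.
  - intros [Hsmall | [-> | [-> | [-> | [-> | [-> | ->]]]]]].
    + apply (L_mono 1); [lia | apply L1_iff; exact Hsmall].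
    + apply (L_of_coeffs 2 (pair_coeffs 0 0)); check_coeffs.
    + apply (L_of_coeffs 2 (pair_coeffs 5 5)); check_coeffs.
    + apply (L_of_coeffs 2 (pair_coeffs 1 9)); check_coeffs.
    + apply (L_of_coeffs 2 (pair_coeffs 4 6)); check_coeffs.
    + apply (L_of_coeffs 2 (pair_coeffs 3 7)); check_coeffs.
    + apply (L_of_coeffs 2 (pair_coeffs 2 8)); check_coeffs.
Qed.

Lemma L2_new_not_L1 (z : C) : L2_new_points z -> ~ L1_points z.
Proof.
  pose proof tau_bounds. pose proof tau_add_tau'.
  intros Hnew Hold.
  destruct Hnew as [-> | [-> | [-> | [-> | [-> | ->]]]]];
    destruct Hold as [E | [E | E]]; apply RtoC_inj in E; lra.
Qed.

Theorem proposition6p3 : forall z : C,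
  (L 2 z /\ ~ L 1 z) <->
  (z = RtoC 2 \/ z = RtoC (-2) \/ z = RtoC tau \/ z = RtoC (- tau) \/
   z = RtoC tau' \/ z = RtoC (- tau')).
Proof.
  intro z.
  rewrite L2_iff, L1_iff.
  pose proof (L2_new_not_L1 z).
  unfold L2_new_points in *. tauto.
Qed.
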